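(* Let $(Y,\Gamma)$ be a sutured cobordism from $(F_0,\Lambda_0)$ to $(F_1,\Lambda_1)$, $n_i=\operatorname{rank}H_1(F_i,S_i^+)$, $d=-\chi(Y,R^+)$, $c=n_1-d$. There is a $\mathbb{Z}$-linear map $\mathsf{A}_{\mathbb{Z}}(Y,\Gamma)\colon\wedge^*H_1(F_0,S_0^+)\to\wedge^*H_1(F_1,S_1^+)$, homogeneous of degree $c$ and unique up to an overall sign, such that for all $x\in\wedge^*H_1(F_0,S_0^+)$ and $y\in\wedge^*H_1(F_1,S_1^+)$, \[\omega\big(\wedge(\mathsf{A}_{\mathbb{Z}}(Y,\Gamma)\otimes\mathrm{id})(x\otimes y)\big)=\mathcal{A}^{\mathbb{Z}}_{Y,\Gamma}(i_*x\wedge i_*y),\] where $\omega\colon\wedge^{n_1}H_1(F_1,S_1^+)\to\mathbb{Z}$ is any volume form, $\wedge\colon\wedge^pH_1(F_1,S_1^+)\otimes\wedge^qH_1(F_1,S_1^+)\to\wedge^{n_1}H_1(F_1,S_1^+)$ is $z\otimes w\mapsto z\wedge w$ if $p+q=n_1$ and $0$ otherwise, $(\mathsf{A}\otimes\mathrm{id})(x\otimes y)=(-1)^{c|y|}\mathsf{A}(x)\otimes y$, and $\mathcal{A}^{\mathbb{Z}}_{Y,\Gamma}$ is extended by $0$ on $\wedge^{d'}H_1(Y,R^+)$ for $d'\ne d$. Moreover, changing the volume form changes $\mathsf{A}_{\mathbb{Z}}(Y,\Gamma)$ only by a global sign.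
   Context: A sutured surface $(F,\Lambda)$: compact oriented surface with finite $\Lambda\subset\partial F$ dividing $\partial F$ into alternating $S^+,S^-$, each component meeting both. A sutured cobordism $(Y,\Gamma)$ from $(F_0,\Lambda_0)$ to $(F_1,\Lambda_1)$: compact oriented 3-manifold with $F_1\sqcup-F_0\hookrightarrow\partial Y$ and arcs/circles $\Gamma$ on the rest of $\partial Y$, $\partial\Gamma=\Lambda_1\sqcup\Lambda_0$, dividing it into alternating $R^+,R^-$ with $R^\pm\cap F_i=S_i^\pm$, each component meeting $R^+$ and $R^-$. $H_1(F_i,S_i^+)$ is free abelian; $i_*\colon H_1(F_i,S_i^+)\to H_1(Y,R^+)$ is induced by inclusion and extended to exterior powers. The Alexander function $\mathcal{A}^{\mathbb{Z}}_{Y,\Gamma}\colon\wedge^dH_1(Y,R^+)\to\mathbb{Z}$ (defined up to global sign) is $0$ if $H_2(Y,R^+)\ne0$; otherwise, choosing an injective presentation matrix $P$ of deficiency $d$ for $H_1(Y,R^+)$ (one exists in this case), $\mathcal{A}^{\mathbb{Z}}_{Y,\Gamma}(u_1\wedge\cdots\wedge u_d)=\det[P\,|\,\bar u_1\cdots\bar u_d]$ with $\bar u_j$ any lifts of $u_j$ to the generators, appended as columns. *)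

From HB Require Import structures.
From mathcomp Require Import all_boot all_order all_algebra.
Set Implicit Arguments. Unset Strict Implicit. Unset Printing Implicit Defensive.
Import Order.TTheory GRing.Theory Num.Theory.
Local Open Scope ring_scope.

(* The exterior algebra /\^* Z^n of the free abelian group Z^n with basis
   e_0 < ... < e_(n-1): an element is given by its coordinates on the basis
   e_S := e_(s_1) /\ ... /\ e_(s_k), S = {s_1 < ... < s_k} \subset 'I_n.
   The degree-k part consists of the coordinates on sets with #|S| = k. *)
Definition ext (n : nat) := {set 'I_n} -> int.

Definition basis_vec n (T : {set 'I_n}) : ext n := fun V => (V == T)%:R.

(* e_S /\ e_T = wsign S T * e_(S :|: T) when S, T are disjoint *)
Definition wsign n (S T : {set 'I_n}) : int :=
  (-1) ^+ #|[set p : 'I_n * 'I_n |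
              [&& p.1 \in S, p.2 \in T & (nat_of_ord p.2 < nat_of_ord p.1)%N]]|.

Definition wedge n (z w : ext n) : ext n := fun U =>
  \sum_(S : {set 'I_n}) \sum_(T : {set 'I_n})
     (if [disjoint S & T] && (S :|: T == U) then wsign S T * z S * w T else 0).

(* the map  /\ : /\^p (x) /\^q -> /\^n,  z (x) w |-> z /\ w if p + q = n, 0
   otherwise (extended bilinearly to all degrees): keep the top-degree part *)
Definition wedge_top n (z w : ext n) : ext n := fun U =>
  if U == setT then wedge z w U else 0.

(* volume forms on /\^n Z^n (an isomorphism /\^n Z^n -> Z): v |-> om * v_[n]
   with om = 1 or -1 *)
Definition is_volume_form (om : int) : bool := (om == 1) || (om == -1).
Definition vol n (om : int) (v : ext n) : int := om * v setT.

(* a Z-linear map /\^* Z^n0 -> /\^* Z^n1 given by its matrix A S U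
   (coefficient of e_U in the image of e_S) *)
Definition applyA n0 n1 (A : {set 'I_n0} -> {set 'I_n1} -> int) (x : ext n0)
  : ext n1 := fun U => \sum_(S : {set 'I_n0}) x S * A S U.

Definition homogeneous n0 n1 (c : int) (A : {set 'I_n0} -> {set 'I_n1} -> int)
  : Prop := forall S U, A S U != 0 -> #|U|%:Z = #|S|%:Z + c.

Definition tensor_sign (c : int) (k : nat) : int := (-1) ^+ absz (c * k%:Z).

(* omega( /\ ((A (x) id)(x (x) y)) ), where (A (x) id)(x (x) e_T) =
   (-1)^(c |T|) A(x) (x) e_T, extended linearly in y *)
Definition pairing_lhs n0 n1 (c om : int) (A : {set 'I_n0} -> {set 'I_n1} -> int)
  (x : ext n0) (y : ext n1) : int :=
  \sum_(T : {set 'I_n1})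
     y T * tensor_sign c #|T| * vol om (wedge_top (applyA A x) (basis_vec T)).

(* The composite (S,T) |-> A^Z_{Y,Gamma}(i_* e_S /\ i_* e_T), extended
   bilinearly: x,y |-> A^Z_{Y,Gamma}(i_* x /\ i_* y). *)
Definition alex_ext n0 n1 (alex : {set 'I_n0} -> {set 'I_n1} -> int)
  (x : ext n0) (y : ext n1) : int :=
  \sum_(S : {set 'I_n0}) \sum_(T : {set 'I_n1}) x S * y T * alex S T.

(* H_1(Y,R^+) = coker P for P : Z^r -> Z^m; L0, L1 : columns are lifts to
   the generators Z^m of i_* of the basis vectors of H_1(F_i,S_i^+).
   det [P | lifts of i_* e_S | lifts of i_* e_T] (0 if the number of
   columns is not m, i.e. if #|S| + #|T| <> d = m - r). *)
Definition alex_det m r n0 n1 (P : 'M[int]_(m, r)) (L0 : 'M[int]_(m, n0))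
  (L1 : 'M[int]_(m, n1)) (S : {set 'I_n0}) (T : {set 'I_n1}) : int :=
  let cols := [seq col j P | j <- enum 'I_r] ++ [seq col i L0 | i <- enum S]
              ++ [seq col i L1 | i <- enum T] in
  if size cols == m then \det (\matrix_(i < m, j < m) (nth 0 cols j) i ord0)
  else 0.

(* The Alexander function of (Y,Gamma), composed with i_*: either 0 (the case
   H_2(Y,R^+) <> 0) or given by an injective presentation matrix of
   deficiency d of H_1(Y,R^+). *)
Definition alexander_composite n0 n1 (d : int)
  (alex : {set 'I_n0} -> {set 'I_n1} -> int) : Prop :=
  (forall S T, alex S T = 0) \/
  exists (m r : nat) (P : 'M[int]_(m, r)) (L0 : 'M[int]_(m, n0))
         (L1 : 'M[int]_(m, n1)),
    [/\ m%:Z = r%:Z + d,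
        (forall v : 'cV[int]_r, P *m v = 0 -> v = 0)
      & forall S T, alex S T = alex_det P L0 L1 S T].

From HB Require Import structures.
From mathcomp Require Import all_boot all_order all_algebra.
From mathcomp Require Import ring.

Set Implicit Arguments.
Unset Strict Implicit.
Unset Printing Implicit Defensive.
Import Order.TTheory GRing.Theory Num.Theory.
Local Open Scope ring_scope.

(* On basis vectors, omega(/\((A (x) id)(e_S (x) e_T))) only sees the
   coefficient of A(e_S) on e_(~T), multiplied by the three signs omega[n],
   (-1)^(c|T|) and the sign of e_(~T) /\ e_T.  All three are units squaring
   to 1, so prescribing the pairing determines A entry by entry, as
   A(S, U) = +-A^Z(S, ~U); changing omega or the sign of A^Z multiplies every
   entry by the same sign.  Homogeneity of degree c = n1 - d holds because
   A^Z(S, T) vanishes unless the presentation matrix and the lifts of e_S, e_T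
   form a square matrix, i.e. unless |S| + |T| = d. *)

Lemma volume_formMK (om : int) : is_volume_form om -> involutive ( *%R om).
Proof. by case/orP=> /eqP-> x; rewrite ?mul1r ?mulN1r ?opprK. Qed.

Lemma volume_formM (a b : int) :
  is_volume_form a -> is_volume_form b -> is_volume_form (a * b).
Proof. by case/orP=> /eqP->; case/orP=> /eqP->. Qed.

Lemma disjoint_setU_eqT n (S T : {set 'I_n}) :
  [disjoint S & T] && (S :|: T == setT) = (S == ~: T).
Proof.
apply/idP/eqP=> [/andP[dST /eqP covST] | ->]; last first.
  by rewrite setUC setUCr eqxx andbT disjoints_subset.
apply/setP=> x; rewrite in_setC.
have := in_setT x; rewrite -covST in_setU.
by case: (boolP (x \in T)) => [xT _|_]; rewrite ?(disjointFl dST xT) ?orbF.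
Qed.

Lemma sum_basis_vec n (F : {set 'I_n} -> int) (T : {set 'I_n}) :
  \sum_S basis_vec T S * F S = F T.
Proof.
rewrite (bigD1 T) //= big1 ?addr0 => [|S /negbTE neST]; rewrite /basis_vec.
  by rewrite eqxx mul1r.
by rewrite neST mul0r.
Qed.

Lemma wedge_top_basis_vec n (z : ext n) (T : {set 'I_n}) :
  wedge_top z (basis_vec T) setT = wsign (~: T) T * z (~: T).
Proof.
rewrite /wedge_top eqxx /wedge (bigD1 (~: T)) //= [X in _ + X]big1 ?addr0.
  under eq_bigr do rewrite disjoint_setU_eqT (inj_eq (@setC_inj _)).
  rewrite (bigD1 T) //= eqxx /basis_vec eqxx mulr1 big1 ?addr0 // => T'.
  by rewrite eq_sym => /negbTE->.
move=> S /negbTE neS; apply: big1 => T' _.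
rewrite disjoint_setU_eqT /basis_vec; have [eqS|//] := eqVneq S (~: T').
have [eqT'|_] := eqVneq T' T; last by rewrite mulr0.
by rewrite eqS eqT' eqxx in neS.
Qed.

Lemma alex_ext_basis_vec n0 n1 (B : {set 'I_n0} -> {set 'I_n1} -> int) S T :
  alex_ext B (basis_vec S) (basis_vec T) = B S T.
Proof.
rewrite /alex_ext; under eq_bigr do under eq_bigr do rewrite -mulrA.
under eq_bigr do rewrite -big_distrr /= sum_basis_vec.
exact: sum_basis_vec.
Qed.

Lemma eq_alex_ext n0 n1 (B B' : {set 'I_n0} -> {set 'I_n1} -> int) x y :
  B =2 B' -> alex_ext B x y = alex_ext B' x y.
Proof. by move=> eqB; apply: eq_bigr => S _; apply: eq_bigr => T _; rewrite eqB. Qed.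

Section PairingCoefficients.

Variables (n0 n1 : nat) (c om : int).
Implicit Types (A B : {set 'I_n0} -> {set 'I_n1} -> int) (S : {set 'I_n0})
  (T U : {set 'I_n1}).

Definition pairing_coef A S T :=
  tensor_sign c #|T| * (om * (wsign (~: T) T * A S (~: T))).

Definition map_of_pairing B S U :=
  tensor_sign c #|~: U| * (om * (wsign U (~: U) * B S (~: U))).

Lemma pairing_lhsE A x y :
  pairing_lhs c om A x y = alex_ext (pairing_coef A) x y.
Proof.
rewrite /pairing_lhs /alex_ext exchange_big; apply: eq_bigr => T _.
rewrite /vol wedge_top_basis_vec /applyA !big_distrr /=.
by apply: eq_bigr => S _; rewrite /pairing_coef; ring.
Qed.

Hypothesis om_vol : is_volume_form om.

Lemma pairing_coefK B : pairing_coef (map_of_pairing B) =2 B.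
Proof.
move=> S T; rewrite /pairing_coef /map_of_pairing setCK.
transitivity (tensor_sign c #|T| * (tensor_sign c #|T| *
  (wsign (~: T) T * (wsign (~: T) T * (om * (om * B S T)))))); first by ring.
by rewrite !signrMK volume_formMK.
Qed.

Lemma map_of_pairingK A : map_of_pairing (pairing_coef A) =2 A.
Proof.
move=> S U; rewrite /pairing_coef /map_of_pairing setCK.
transitivity (tensor_sign c #|~: U| * (tensor_sign c #|~: U| *
  (wsign U (~: U) * (wsign U (~: U) * (om * (om * A S U)))))); first by ring.
by rewrite !signrMK volume_formMK.
Qed.

End PairingCoefficients.

Lemma map_of_pairingZ n0 n1 (c om om' e : int)
    (B : {set 'I_n0} -> {set 'I_n1} -> int) S U :
  is_volume_form om ->
  map_of_pairing c om' (fun S T => e * B S T) S U =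
  e * om' * om * map_of_pairing c om B S U.
Proof.
move=> om_vol; rewrite /map_of_pairing -[in LHS](volume_formMK om_vol (B S _)).
ring.
Qed.

Lemma alex_det_card m r n0 n1 (P : 'M[int]_(m, r)) (L0 : 'M[int]_(m, n0))
    (L1 : 'M[int]_(m, n1)) S T :
  alex_det P L0 L1 S T != 0 -> (r + #|S| + #|T|)%N = m.
Proof.
rewrite /alex_det; case: ifP => [/eqP size_cols _|_]; last by rewrite eqxx.
by rewrite -size_cols !size_cat !size_map -enumT size_enum_ord -!cardE addnA.
Qed.

Lemma alexander_composite_card n0 n1 (d : int)
    (alex : {set 'I_n0} -> {set 'I_n1} -> int) S T :
  alexander_composite d alex -> alex S T != 0 -> #|S|%:Z + #|T|%:Z = d.
Proof.
case=> [-> | [m [r [P [L0 [L1 [m_rd _ alexE]]]]]]]; first by rewrite eqxx.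
rewrite alexE => /alex_det_card size_cols.
by apply: (addrI r%:Z); rewrite -m_rd -size_cols !PoszD addrA.
Qed.

Lemma homogeneous_map_of_pairing n0 n1 (d om : int)
    (alex : {set 'I_n0} -> {set 'I_n1} -> int) :
  alexander_composite d alex ->
  homogeneous (n1%:Z - d) (map_of_pairing (n1%:Z - d) om alex).
Proof.
move=> alexC S U; rewrite /map_of_pairing !mulf_eq0 negb_or => /andP[_].
rewrite !negb_or => /andP[_ /andP[_ /(alexander_composite_card alexC) <-]].
have n1E : n1%:Z = #|U|%:Z + #|~: U|%:Z by rewrite -PoszD cardsC card_ord.
by rewrite n1E; ring.
Qed.

Theorem proposition5p5 (n0 n1 : nat) (d : int)
  (alex : {set 'I_n0} -> {set 'I_n1} -> int)
  (Halex : alexander_composite d alex)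
  (om : int) (Hom : is_volume_form om) :
  let c := n1%:Z - d in
  exists A : {set 'I_n0} -> {set 'I_n1} -> int,
    [/\ homogeneous c A,
        (forall x y, pairing_lhs c om A x y = alex_ext alex x y)
      & (forall (om' : int) (A' : {set 'I_n0} -> {set 'I_n1} -> int),
           is_volume_form om' -> homogeneous c A' ->
           ((forall x y, pairing_lhs c om' A' x y = alex_ext alex x y) \/
            (forall x y, pairing_lhs c om' A' x y = - alex_ext alex x y)) ->
           exists eps : int, is_volume_form eps /\
             (forall S U, A' S U = eps * A S U))].
Proof.
move=> c; exists (map_of_pairing c om alex); split.
- exact: homogeneous_map_of_pairing.
- by move=> x y; rewrite pairing_lhsE; apply: eq_alex_ext; apply: pairing_coefK.
move=> om' A' om'_vol _ A'_pairing.
have [sg sg_vol coefA'] : exists2 sg, is_volume_form sg &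
    forall S T, pairing_coef c om' A' S T = sg * alex S T.
  case: A'_pairing => pairingA'; [exists 1 | exists (-1)] => // S T;
    by rewrite -alex_ext_basis_vec -pairing_lhsE pairingA' alex_ext_basis_vec
               ?mul1r ?mulN1r.
exists (sg * om' * om); split; first by rewrite !volume_formM.
move=> S U; rewrite -(map_of_pairingK c om'_vol A' S U) -map_of_pairingZ //.
by rewrite /map_of_pairing coefA'.
Qed.
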